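(* Let $P$ be a generic regular pentagon in $\mathbb{R}^3$ and $u_1,\ldots,u_5$ a support system of $P$. Then the derived pentagon $P'=B_1\ldots B_5$ is a plane pentagon (all five vertices are coplanar) with oriented area $0$.
   Context: For a closed polygon $P=A_1\ldots A_n$ in $\mathbb{R}^3$ put $v_1=\overline{A_1A_2},\ldots,v_n=\overline{A_nA_1}$, indices cyclic mod $n$. $P$ is generic if any two consecutive $v_i,v_{i+1}$ are not collinear and any three consecutive $v_i,v_{i+1},v_{i+2}$ are not coplanar. A support system of $P$ is a tuple $u_1,\ldots,u_n$ with $[u_i,u_{i+1}]=v_{i+1}$ for all $i$ (cyclically; $[\cdot,\cdot]$ is the cross product). A generic polygon is regular if it has a support system. Given a support system, fix an origin $O$ and let $B_i$ be the point with $\overline{OB_i}=u_i$; the polygon $P'=B_1\ldots B_n$ is the derived polygon of $P$. A closed polygon $B_1\ldots B_n$ has oriented area $0$ if $\sum_{i=1}^n[\overline{OB_i},\overline{OB_{i+1}}]=0$ (independent of $O$); for a plane polygon this means its signed area in its plane is zero. *)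

(* Points/vectors of R^3 are row vectors 'rV[R]_3 over a
   real field R; polygons with n vertices are maps 'I_n -> 'rV[R]_3,
   indices cyclic via ordS (i |-> i+1 mod n). Vertex A_{k+1} of the paper
   is A k here (0-based). *)
From mathcomp Require Import all_boot all_order all_algebra.
Set Implicit Arguments. Unset Strict Implicit. Unset Printing Implicit Defensive.
Import Order.TTheory GRing.Theory Num.Theory.
Local Open Scope ring_scope.

Section Defs.
Variable R : realFieldType.
Notation vec := 'rV[R]_3.

Definition crossp (a b : vec) : vec :=
  \row_(k < 3)
    (if k == 0 :> nat then a 0 1 * b 0 2 - a 0 2 * b 0 1
     else if k == 1 :> nat then a 0 2 * b 0 0 - a 0 0 * b 0 2
     else a 0 0 * b 0 1 - a 0 1 * b 0 0).

Definition dotp (a b : vec) : R := \sum_(k < 3) a 0 k * b 0 k.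

Definition collinear (a b : vec) : Prop := (\rank (col_mx a b) <= 1)%N.
Definition coplanar3 (a b c : vec) : Prop :=
  (\rank (col_mx a (col_mx b c)) <= 2)%N.

Definition sides n (A : 'I_n -> vec) (k : 'I_n) : vec := A (ordS k) - A k.

Definition generic n (A : 'I_n -> vec) : Prop :=
  forall k : 'I_n,
    ~ collinear (sides A k) (sides A (ordS k)) /\
    ~ coplanar3 (sides A k) (sides A (ordS k)) (sides A (ordS (ordS k))).

Definition support_system n (A : 'I_n -> vec) (u : 'I_n -> vec) : Prop :=
  forall k : 'I_n, crossp (u k) (u (ordS k)) = sides A (ordS k).

Definition regular n (A : 'I_n -> vec) : Prop :=
  generic A /\ exists u, support_system A u.

(* derived polygon, origin O = 0: B_i = u_i *)
Definition derived n (u : 'I_n -> vec) : 'I_n -> vec := u.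

Definition plane_polygon n (B : 'I_n -> vec) : Prop :=
  exists (nrm : vec) (c : R), nrm != 0 /\ forall k : 'I_n, dotp nrm (B k) = c.

Definition oriented_area_zero n (B : 'I_n -> vec) : Prop :=
  \sum_(k < n) crossp (B k) (B (ordS k)) = 0.

End Defs.

From mathcomp Require Import all_boot all_order all_algebra.
From mathcomp Require Import ring.
Set Implicit Arguments. Unset Strict Implicit. Unset Printing Implicit Defensive.
Import GRing.Theory.
Local Open Scope ring_scope.

(* The sides of a closed polygon sum to zero, so summing the
   support relations [u_k, u_(k+1)] = v_(k+1) over all k gives
   sum_k [u_k, u_(k+1)] = 0: the derived polygon has oriented area 0.  This
   holds for every n.  For three points a0, a1, a2 the vector
   N = [a1,a2] + [a2,a0] + [a0,a1] satisfies N.a_i = (a0,a1,a2) (the triple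
   product) for i = 0, 1, 2, so N is a normal of the plane through them.  For a
   pentagon a0..a4, the defects N.a3 - (a0,a1,a2) and N.a4 - (a0,a1,a2) are
   dot products of a3 - a0 and a4 - a2 with the oriented area vector, hence
   vanish when the area does.  Finally N != 0 because N.a0 = (u0,u1,u2) != 0:
   the determinant of the three sides [u0,u1], [u1,u2], [u2,u3] equals
   (u0,u1,u2)(u1,u2,u3), and genericity forbids these sides to be coplanar. *)

Lemma det_mx33 (R : comNzRingType) (M : 'M[R]_3) : \det M =
  M 0 0 * (M 1 1 * M 2 2 - M 1 2 * M 2 1)
  - M 0 1 * (M 1 0 * M 2 2 - M 1 2 * M 2 0)
  + M 0 2 * (M 1 0 * M 2 1 - M 1 1 * M 2 0).
Proof.
rewrite (expand_det_row _ 0) !big_ord_recl big_ord0 /cofactor.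
rewrite !(expand_det_row _ 0) !big_ord_recl !big_ord0 /cofactor !det_mx11 !mxE /=.
pose entry (i j : nat) := M (inord i) (inord j).
have entryE i j : M i j = entry i j by rewrite /entry !inord_val.
rewrite !entryE /= /bump /=.
ring.
Qed.

Lemma col_mx3E (R : ringType) (a b c : 'rV[R]_3) (i j : 'I_3) :
  col_mx a (col_mx b c) i j =
  if i == 0 :> nat then a 0 j else if i == 1 :> nat then b 0 j else c 0 j.
Proof.
rewrite mxE; case: splitP => k Hk; first by rewrite ord1 Hk ord1.
by rewrite mxE; case: splitP => l Hl; rewrite !ord1 in Hl *; rewrite Hk /= Hl.
Qed.

Lemma det0_coplanar3 (R : realFieldType) (a b c : 'rV[R]_3) :
  \det (col_mx a (col_mx b c)) = 0 -> coplanar3 a b c.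
Proof.
move=> det0; rewrite /coplanar3.
have : ~~ row_free (col_mx a (col_mx b c)).
  by rewrite row_free_unit unitmxE unitfE det0 eqxx.
rewrite /row_free => not_full.
by have := rank_leq_row (col_mx a (col_mx b c)); rewrite leq_eqVlt (negbTE not_full).
Qed.

Lemma sum_sides (R : realFieldType) n (A : 'I_n -> 'rV[R]_3) :
  \sum_(k < n) sides A k = 0.
Proof. by rewrite /sides sumrB [X in _ - X](reindex_inj (@ordS_inj _)) subrr. Qed.

Lemma support_area_zero (R : realFieldType) n (A u : 'I_n -> 'rV[R]_3) :
  support_system A u -> oriented_area_zero (derived u).
Proof.
move=> Hu; rewrite /oriented_area_zero /derived -[RHS](sum_sides A).
rewrite [RHS](reindex_inj (@ordS_inj _)) /=.
by apply: eq_bigr => k _; rewrite Hu.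
Qed.

Section CrossProduct.
Variable R : realFieldType.
Implicit Types a b c d : 'rV[R]_3.

Definition triple a b c : R := dotp a (crossp b c).

Definition plane_normal a b c : 'rV[R]_3 := crossp b c + crossp c a + crossp a b.

(* Coordinates indexed by natural numbers, so that after expansion [ring]
   sees each coordinate as a single atom whatever ordinal term produced it. *)
Let coord a (n : nat) : R := a 0 (inord n).

Let coordE a (k : 'I_3) : a 0 k = coord a k.
Proof. by rewrite /coord inord_val. Qed.

Ltac coords := rewrite /triple /plane_normal /dotp /crossp
  ?big_ord_recl ?big_ord0 ?mxE /= ?big_ord0 ?mxE /= ?coordE /= /bump /=.

Lemma dotp0l a : dotp 0 a = 0.
Proof. coords; ring. Qed.

Lemma dotp0r a : dotp a 0 = 0.
Proof. coords; ring. Qed.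

Lemma plane_normal_dot0 a b c : dotp (plane_normal a b c) a = triple a b c.
Proof. coords; ring. Qed.

Lemma plane_normal_dot1 a b c : dotp (plane_normal a b c) b = triple a b c.
Proof. coords; ring. Qed.

Lemma plane_normal_dot2 a b c : dotp (plane_normal a b c) c = triple a b c.
Proof. coords; ring. Qed.

Definition area5 a0 a1 a2 a3 a4 : 'rV[R]_3 :=
  crossp a0 a1 + crossp a1 a2 + crossp a2 a3 + crossp a3 a4 + crossp a4 a0.

Lemma plane_normal_dot3 a0 a1 a2 a3 a4 :
  dotp (plane_normal a0 a1 a2) a3 - triple a0 a1 a2 =
  dotp (a3 - a0) (area5 a0 a1 a2 a3 a4).
Proof. rewrite /area5; coords; ring. Qed.

Lemma plane_normal_dot4 a0 a1 a2 a3 a4 :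
  dotp (plane_normal a0 a1 a2) a4 - triple a0 a1 a2 =
  dotp (a4 - a2) (area5 a0 a1 a2 a3 a4).
Proof. rewrite /area5; coords; ring. Qed.

Lemma det_crossp3 a b c d :
  \det (col_mx (crossp a b) (col_mx (crossp b c) (crossp c d))) =
  triple a b c * triple b c d.
Proof. rewrite det_mx33 !col_mx3E /=; coords; ring. Qed.

End CrossProduct.

Lemma support_triple_neq0 (R : realFieldType) n (A u : 'I_n -> 'rV[R]_3) k :
  generic A -> support_system A u ->
  triple (u k) (u (ordS k)) (u (ordS (ordS k))) != 0.
Proof.
move=> Hgen Hu; apply/eqP => triple0.
have [_ not_coplanar] := Hgen (ordS k); apply: not_coplanar.
rewrite -!Hu; apply: det0_coplanar3.
by rewrite det_crossp3 triple0 mul0r.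
Qed.

Lemma ordS5 (i : nat) : (i < 5)%N -> ordS (inord i : 'I_5) = inord (i.+1 %% 5).
Proof. by move=> Hi; apply: val_inj; rewrite /= !inordK // ltn_mod. Qed.

Lemma sum5 (V : zmodType) (F : 'I_5 -> V) :
  \sum_(k < 5) F k = F (inord 0) + F (inord 1) + F (inord 2) + F (inord 3) + F (inord 4).
Proof.
rewrite !big_ord_recl big_ord0 addr0 !addrA.
by congr (_ + _ + _ + _ + _); congr F; apply: val_inj; rewrite /= inordK.
Qed.

Lemma area_zero_pentagon_plane (R : realFieldType) (a : 'I_5 -> 'rV[R]_3) :
  oriented_area_zero a -> triple (a (inord 0)) (a (inord 1)) (a (inord 2)) != 0 ->
  plane_polygon a.
Proof.
rewrite /oriented_area_zero sum5 !ordS5 //=.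
set a0 := a (inord 0); set a1 := a (inord 1); set a2 := a (inord 2).
set a3 := a (inord 3); set a4 := a (inord 4) => area0 triple_neq0.
have on_plane3 : dotp (plane_normal a0 a1 a2) a3 = triple a0 a1 a2.
  by apply/eqP; rewrite -subr_eq0 (plane_normal_dot3 _ _ _ _ a4) /area5 area0 dotp0r.
have on_plane4 : dotp (plane_normal a0 a1 a2) a4 = triple a0 a1 a2.
  by apply/eqP; rewrite -subr_eq0 (plane_normal_dot4 _ _ _ a3) /area5 area0 dotp0r.
exists (plane_normal a0 a1 a2), (triple a0 a1 a2); split.
  apply: contraNneq triple_neq0 => N0.
  by rewrite -(plane_normal_dot0 a0 a1 a2) N0 dotp0l.
move=> k; rewrite -[k]inord_val.
case: k => [[|[|[|[|[|i]]]]] //= _].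
- exact: plane_normal_dot0.
- exact: plane_normal_dot1.
- exact: plane_normal_dot2.
Qed.

Theorem theorem4p1 (R : realFieldType) (A u : 'I_5 -> 'rV[R]_3) :
  regular A -> support_system A u ->
  plane_polygon (derived u) /\ oriented_area_zero (derived u).
Proof.
move=> [Hgen _] Hu.
have area0 := support_area_zero Hu.
split=> //; apply: area_zero_pentagon_plane => //.
have := support_triple_neq0 (inord 0) Hgen Hu.
by rewrite !ordS5.
Qed.
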